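(* Let $A$ be a commutative ring and $\sigma$ a hereditary torsion theory on $A$-modules such that $A$ is totally $\sigma$-artinian. Then every invertible ideal $\mathfrak{a}$ of $A$ belongs to $\mathcal{L}(\sigma)$.
   Context: $\mathcal{L}(\sigma)$ is the Gabriel filter of $\sigma$. $A$ is totally $\sigma$-artinian if for every descending chain of ideals $\mathfrak{a}_1\supseteq\mathfrak{a}_2\supseteq\cdots$ there exist $m$ and $\mathfrak{h}\in\mathcal{L}(\sigma)$ with $\mathfrak{a}_m\mathfrak{h}\subseteq\mathfrak{a}_s$ for all $s\ge m$. Let $T$ be the total ring of fractions of $A$ (localization at the set of regular elements). An ideal $\mathfrak{a}$ is invertible if $\mathfrak{a}(A:\mathfrak{a})=A$, where $(A:\mathfrak{a})=\{x\in T:\mathfrak{a}x\subseteq A\}$. *)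

From HB Require Import structures.
From mathcomp Require Import all_boot all_order all_algebra.
Set Implicit Arguments. Unset Strict Implicit. Unset Printing Implicit Defensive.
Import GRing.Theory.
Local Open Scope ring_scope.

Definition subI (T : Type) (I J : T -> Prop) : Prop := forall x, I x -> J x.

Definition is_ideal (A : comNzRingType) (I : A -> Prop) : Prop :=
  [/\ I 0, (forall x y, I x -> I y -> I (x + y)) & (forall r x, I x -> I (r * x))].

Definition mulI (A : comNzRingType) (I J : A -> Prop) : A -> Prop :=
  fun x => exists n (a b : 'I_n -> A),
    (forall i, I (a i) /\ J (b i)) /\ x = \sum_(i < n) a i * b i.

Definition capI (A : comNzRingType) (I J : A -> Prop) : A -> Prop :=
  fun x => I x /\ J x.

Definition colonI (A : comNzRingType) (I : A -> Prop) (r : A) : A -> Prop :=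
  fun x => I (x * r).

(* Gabriel filter (Gabriel topology) of ideals, Stenstrom VI.5:
   the Gabriel filters correspond bijectively to hereditary torsion
   theories sigma, via L(sigma) = { a | A/a is sigma-torsion }. *)
Definition gabriel_filter (A : comNzRingType) (L : (A -> Prop) -> Prop) : Prop :=
  (forall I, L I -> is_ideal I) /\
  L (fun _ => True) /\
  (forall I J, L I -> is_ideal J -> subI I J -> L J) /\
  (forall I J, L I -> L J -> L (capI I J)) /\
  (forall I r, L I -> L (colonI I r)) /\
  (forall I J, is_ideal J -> L I -> (forall r, I r -> L (colonI J r)) -> L J).

Definition totally_artinian (A : comNzRingType) (L : (A -> Prop) -> Prop) : Prop :=
  forall a : nat -> (A -> Prop),
    (forall n, is_ideal (a n)) -> (forall n, subI (a n.+1) (a n)) ->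
    exists m (h : A -> Prop), L h /\ forall s, (m <= s)%N -> subI (mulI (a m) h) (a s).

Definition regular (A : comNzRingType) (s : A) : Prop := forall x, s * x = 0 -> x = 0.

(* (T, iota) is the total ring of fractions of A, i.e. the localization
   of A at its regular elements (characterized by its universal data). *)
Definition total_ring_of_fractions (A : comNzRingType) (T : comUnitRingType)
    (iota : {rmorphism A -> T}) : Prop :=
  [/\ (forall s, regular s -> iota s \is a GRing.unit),
      (forall t, exists a s, regular s /\ t = iota a / iota s) &
      (forall a, iota a = 0 -> exists s, regular s /\ s * a = 0)].

Definition frac_colon (A : comNzRingType) (T : comUnitRingType)
    (iota : {rmorphism A -> T}) (I : A -> Prop) : T -> Prop :=
  fun x => forall a, I a -> exists b, iota a * x = iota b.

Definition mulIT (A : comNzRingType) (T : comUnitRingType)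
    (iota : {rmorphism A -> T}) (I : A -> Prop) (X : T -> Prop) : T -> Prop :=
  fun t => exists n (u : 'I_n -> A) (v : 'I_n -> T),
    (forall i, I (u i) /\ X (v i)) /\ t = \sum_(i < n) iota (u i) * v i.

Definition invertible_ideal (A : comNzRingType) (T : comUnitRingType)
    (iota : {rmorphism A -> T}) (I : A -> Prop) : Prop :=
  forall t, mulIT iota I (frac_colon iota I) t <-> exists b, t = iota b.

(* Put [a^0 = A] and [a^(n+1) = {x | x (A : a) ⊆ a^n}]; for invertible [a] this is the usual
   power, and [a^(m+1) : x ⊇ a^m] cancels down to [x ∈ a]. Total σ-artinianity applied to the
   descending chain of powers gives [h ∈ L(σ)] with [a^m h ⊆ a^(m+1)], so [h ⊆ a] and [a ∈ L(σ)]. *)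
From mathcomp Require Import all_boot all_order all_algebra.
From mathcomp Require Import ring.
Set Implicit Arguments. Unset Strict Implicit. Unset Printing Implicit Defensive.
Import GRing.Theory.
Local Open Scope ring_scope.

Lemma ideal_sum (A : comNzRingType) (P : A -> Prop) k (c : 'I_k -> A) :
  is_ideal P -> (forall i, P (c i)) -> P (\sum_(i < k) c i).
Proof. by move=> [P0 PD _] Pc; elim/big_ind: _. Qed.

Lemma mulI_mul (A : comNzRingType) (P Q : A -> Prop) x y :
  P x -> Q y -> mulI P Q (x * y).
Proof. by move=> Px Qy; exists 1%N, (fun=> x), (fun=> y); rewrite big_ord1. Qed.

Lemma total_ring_of_fractions_inj (A : comNzRingType) (T : comUnitRingType)
    (iota : {rmorphism A -> T}) :
  total_ring_of_fractions iota -> injective iota.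
Proof.
move=> [_ _ ker_iota] a b eq_ab; apply/eqP; rewrite -subr_eq0; apply/eqP.
have /ker_iota[s [reg_s /reg_s//]] : iota (a - b) = 0 by rewrite rmorphB eq_ab subrr.
Qed.

Section ColonPowers.

Variables (A : comNzRingType) (T : comUnitRingType) (iota : {rmorphism A -> T}).
Variable I : A -> Prop.

Fixpoint colon_pow (n : nat) : A -> Prop :=
  if n is n'.+1 then fun x => forall t, frac_colon iota I t ->
    exists b, iota x * t = iota b /\ colon_pow n' b
  else fun _ => True.

Lemma colon_pow_ideal n : is_ideal (colon_pow n).
Proof.
elim: n => [|n [P0 PD PM]]; first by [].
split=> [t _ | x y Px Py t It | r x Px t It].
- by exists 0; rewrite rmorph0 mul0r.
- have [b1 [E1 P1]] := Px t It; have [b2 [E2 P2]] := Py t It.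
  by exists (b1 + b2); rewrite !rmorphD mulrDl E1 E2; split=> //; apply: PD.
- have [b [E1 P1]] := Px t It.
  by exists (r * b); rewrite rmorphM -mulrA E1 rmorphM; split=> //; apply: PM.
Qed.

Lemma colon_pow_decr n : subI (colon_pow n.+1) (colon_pow n).
Proof.
elim: n => [|n IHn] x // Px t It; have [b [E1 P1]] := Px t It.
by exists b; split=> //; apply: IHn.
Qed.

Lemma colon_powS_mul n w y : I w -> colon_pow n y -> colon_pow n.+1 (w * y).
Proof.
move=> Iw Py t It; have [c Ec] := It w Iw.
exists (c * y); split; first by rewrite !rmorphM -Ec; ring.
by case: (colon_pow_ideal n) => _ _ PM; apply: PM.
Qed.

Variables (k : nat) (u : 'I_k -> A) (v : 'I_k -> T).
Hypothesis uv_frac : forall i, I (u i) /\ frac_colon iota I (v i).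
Hypothesis one_uv : 1 = \sum_(i < k) iota (u i) * v i.

(* [z = Σ u_i (v_i z)], and each summand lies in [P] once [v_i z] does. *)
Lemma image_ideal_of_one_uv (P : A -> Prop) (z : T) : is_ideal P ->
    (forall i, exists c, iota (u i) * (v i * z) = iota c /\ P c) ->
  exists c, z = iota c /\ P c.
Proof.
move=> idP /fin_all_exists[f Pf].
exists (\sum_(i < k) f i); split; last by apply: ideal_sum => // i; case: (Pf i).
rewrite rmorph_sum -[z]mul1r one_uv mulr_suml; apply: eq_bigr => i _.
by case: (Pf i) => <- _; rewrite mulrA.
Qed.

Lemma colon_pow_cancel m x :
  (forall y, colon_pow m y -> colon_pow m.+1 (y * x)) -> colon_pow 1 x.
Proof.
elim: m x => [|m IHm] x powx; first by have := powx 1 Logic.I; rewrite mul1r.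
apply: IHm => y Py t It.
apply: image_ideal_of_one_uv; first exact: colon_pow_ideal.
move=> i; have [Iu Fv] := uv_frac i.
have [b [Eb Pb]] := powx _ (colon_powS_mul Iu Py) t It.
have [c [Ec Pc]] := Pb (v i) Fv.
by exists c; split=> //; rewrite -Ec -Eb !rmorphM; ring.
Qed.

Hypothesis iota_inj : injective iota.
Hypothesis idealI : is_ideal I.

Lemma colon_pow1_sub : subI (colon_pow 1) I.
Proof.
move=> x Px.
have [c [/iota_inj-> //]] : exists c, iota x = iota c /\ I c.
apply: image_ideal_of_one_uv => // i.
have [Iu Fv] := uv_frac i; have [b [Eb _]] := Px (v i) Fv.
exists (u i * b); split; first by rewrite rmorphM -Eb; ring.
by case: idealI => _ _ PM; rewrite mulrC; apply: PM.
Qed.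

End ColonPowers.

Theorem mainTheorem8 (A : comNzRingType) (L : (A -> Prop) -> Prop)
    (T : comUnitRingType) (iota : {rmorphism A -> T}) (I : A -> Prop) :
  gabriel_filter L -> totally_artinian L ->
  total_ring_of_fractions iota ->
  is_ideal I -> invertible_ideal iota I -> L I.
Proof.
move=> [_ [_ [L_up _]]] artA fracT idealI invI.
have [k [u [v [uv_frac one_uv]]]] : mulIT iota I (frac_colon iota I) 1.
  by apply/invI; exists 1; rewrite rmorph1.
have [m [h [Lh powh]]] :=
  artA (colon_pow iota I) (colon_pow_ideal iota I) (@colon_pow_decr _ _ iota I).
apply: (L_up h) => // x hx.
apply: (colon_pow1_sub uv_frac one_uv (total_ring_of_fractions_inj fracT) idealI).
apply: (colon_pow_cancel uv_frac one_uv (m := m)) => y Py.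
exact: (powh m.+1 (leqnSn m) (y * x) (mulI_mul Py hx)).
Qed.
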